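(* Let $K\ge1$ be an integer and $t_1,t_2\in\mathbb C$. Let $A$ be the $2K\times2K$ matrix with entries \[ A_{i,j}=\frac{1}{2\pi i}\oint_{|u|=2}\frac{u^{i+j-2}\exp\left(\frac{t_1}{u-1}+\frac{t_2}{u+1}\right)}{(u-1)^K}\,du\quad(1\le i\le K,\ 1\le j\le 2K), \] \[ A_{K+i,j}=\frac{1}{2\pi i}\oint_{|u|=2}\frac{u^{i+j-2}\exp\left(\frac{t_1}{u-1}+\frac{t_2}{u+1}\right)}{(u+1)^K}\,du\quad(1\le i\le K,\ 1\le j\le 2K). \] Then $\det A=(-2)^{K^2}$; in particular $\det A$ is independent of $t_1$ and $t_2$.
   Context: The circle $|u|=2$ is positively oriented. *)

From Stdlib Require Import Reals List ClassicalEpsilon.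
Open Scope R_scope.

Definition Cx : Type := (R * R)%type.
Definition Cre (z : Cx) : R := fst z.
Definition Cim (z : Cx) : R := snd z.
Definition RtoC (x : R) : Cx := (x, 0).
Definition C0 : Cx := (0, 0).
Definition C1 : Cx := (1, 0).
Definition Ci : Cx := (0, 1).
Definition Cadd (z w : Cx) : Cx := (fst z + fst w, snd z + snd w).
Definition Copp (z : Cx) : Cx := (- fst z, - snd z).
Definition Csub (z w : Cx) : Cx := Cadd z (Copp w).
Definition Cmul (z w : Cx) : Cx :=
  (fst z * fst w - snd z * snd w, fst z * snd w + snd z * fst w).
Definition Cinv (z : Cx) : Cx :=
  let d := fst z * fst z + snd z * snd z in (fst z / d, - snd z / d).
Definition Cdiv (z w : Cx) : Cx := Cmul z (Cinv w).
Fixpoint Cpow (z : Cx) (n : nat) : Cx :=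
  match n with O => C1 | S m => Cmul z (Cpow z m) end.
Definition Cexp (z : Cx) : Cx := (exp (fst z) * cos (snd z), exp (fst z) * sin (snd z)).

(* Riemann integral of a real function on [a,b] (0 if not Riemann integrable;
   the value of RiemannInt does not depend on the integrability proof). *)
Definition RInt (f : R -> R) (a b : R) : R :=
  match excluded_middle_informative (inhabited (Riemann_integrable f a b)) with
  | left h => RiemannInt (epsilon h (fun _ => True))
  | right _ => 0
  end.

Definition gam (th : R) : Cx := (2 * cos th, 2 * sin th).
Definition dgam (th : R) : Cx := (- 2 * sin th, 2 * cos th).

Definition circle2_integral (f : Cx -> Cx) : Cx :=
  let g := fun th => Cmul (f (gam th)) (dgam th) in
  (RInt (fun th => fst (g th)) 0 (2 * PI), RInt (fun th => snd (g th)) 0 (2 * PI)).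

Definition cauchy_int2 (f : Cx -> Cx) : Cx :=
  Cdiv (circle2_integral f) (Cmul (RtoC (2 * PI)) Ci).

(* Finite sums and determinants of square matrices given as functions
   nat -> nat -> Cx, indices 0 .. n-1. *)
Definition Csum (n : nat) (f : nat -> Cx) : Cx :=
  fold_right Cadd C0 (map f (seq 0 n)).

Definition minor0 (M : nat -> nat -> Cx) (j : nat) : nat -> nat -> Cx :=
  fun i k => M (S i) (if Nat.ltb k j then k else S k).

Fixpoint det (n : nat) (M : nat -> nat -> Cx) : Cx :=
  match n with
  | O => C1
  | S m => Csum n (fun j => Cmul (Cmul (Cpow (Copp C1) j) (M 0%nat j))
                                 (det m (minor0 M j)))
  end.

Definition weight (t1 t2 u : Cx) : Cx :=
  Cexp (Cadd (Cdiv t1 (Csub u C1)) (Cdiv t2 (Cadd u C1))).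

(* The 2K x 2K matrix A, 0-based indices: for i < K,
   A i j = (1/2 pi i) oint u^(i+j) w(u) / (u-1)^K du, and for K <= i < 2K,
   A i j = (1/2 pi i) oint u^((i-K)+j) w(u) / (u+1)^K du.
   (1-based exponent i+j-2 becomes the 0-based i+j.) *)
Definition Amat (K : nat) (t1 t2 : Cx) (i j : nat) : Cx :=
  if Nat.ltb i K then
    cauchy_int2 (fun u => Cdiv (Cmul (Cpow u (i + j)) (weight t1 t2 u))
                               (Cpow (Csub u C1) K))
  else
    cauchy_int2 (fun u => Cdiv (Cmul (Cpow u (i - K + j)) (weight t1 t2 u))
                               (Cpow (Cadd u C1) K)).

(* Write x = u - 1 and, for 0 <= i < 2K, let T_i be the polynomial
     T_i(x) = (x+1)^i (x+2)^K          if i < K,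
     T_i(x) = (x+1)^(i-K) x^K          if K <= i < 2K,
   so that T_i(u-1) = u^i (u+1)^K, resp. u^(i-K) (u-1)^K.  Hence the integrand
   of A i j is  sum_m [T_i]_m g_{m,j}(u)  with
     g_{m,j}(u) = (u-1)^m u^j w(u) / ((u-1)^K (u+1)^K),   w = the weight,
   and A = T H, where T = ([T_i]_m) and H m j = (1/2 pi i) oint g_{m,j}.

   * det T = 2^(K^2): T is block upper triangular, its lower right block is the
     unitriangular Pascal matrix and its upper left block is Pascal times the
     triangular matrix of the polynomials x^k (x+2)^K (diagonal entries 2^K).
   * H is anti-triangular with ones on the antidiagonal: for m+j+1+d = 2K the
     function q_{m,d}(z) = z^d (1-z)^m exp(..)/((1-z)^K (1+z)^K) satisfies
     q(1/u) = u g_{m,j}(u), and the integral of g over |u| = 2 equals q(0)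
     ("residue at infinity"), which is 1 if d = 0 and 0 if d > 0.  We prove
     this by showing that the integral over |u| = 1/s does not depend on
     s in (0,1) (its s-derivative is an exact derivative in the angle) and
     letting s -> 0, using continuity of q at 0.
   Hence det A = 2^(K^2) (-1)^K = (-2)^(K^2). *)
From Pilot Require Import Defs.
From Stdlib Require Import Reals List ClassicalEpsilon.
Open Scope R_scope.

From Stdlib Require Import Lra Lia FunctionalExtensionality.
From Coquelicot Require Coquelicot.
From mathcomp Require all_boot all_algebra.
From mathcomp Require Rstruct complex.
From mathcomp Require ring zify.
Import Defs.

(* |u| > 1: the region containing the contour on which every integrand
   below is smooth. *)
Definition outside_unit (u : Cx) : Prop := 1 < fst u * fst u + snd u * snd u.

(* z <> 0, phrased as the denominator test used by Cinv. *)
Definition Cnonzero (z : Cx) : Prop := fst z * fst z + snd z * snd z <> 0.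

Definition Aint (K : nat) (t1 t2 : Cx) (i j : nat) (u : Cx) : Cx :=
  if Nat.ltb i K then Cdiv (Cmul (Cpow u (i + j)) (weight t1 t2 u)) (Cpow (Csub u C1) K)
  else Cdiv (Cmul (Cpow u (i - K + j)) (weight t1 t2 u)) (Cpow (Cadd u C1) K).

Definition gterm (K : nat) (t1 t2 : Cx) (m j : nat) (u : Cx) : Cx :=
  Cdiv (Cmul (Cmul (Cpow (Csub u C1) m) (Cpow u j)) (weight t1 t2 u))
       (Cmul (Cpow (Csub u C1) K) (Cpow (Cadd u C1) K)).

(* The exponent of the weight at u = 1/z: t1 z/(1-z) + t2 z/(1+z). *)
Definition inv_exponent (t1 t2 z : Cx) : Cx :=
  Cadd (Cdiv (Cmul t1 z) (Csub C1 z)) (Cdiv (Cmul t2 z) (Cadd C1 z)).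

(* q_{m,d}(z) = (1-z)^m z^d exp(..) / ((1-z)^K (1+z)^K), which is smooth at
   z = 0 and satisfies q(1/u) = u g_{m,j}(u) when m + j + 1 + d = 2K. *)
Definition qterm (K : nat) (t1 t2 : Cx) (m d : nat) (z : Cx) : Cx :=
  Cdiv (Cmul (Cmul (Cpow (Csub C1 z) m) (Cpow z d)) (Cexp (inv_exponent t1 t2 z)))
       (Cmul (Cpow (Csub C1 z) K) (Cpow (Cadd C1 z) K)).

Lemma Amat_Aint K t1 t2 i j : Amat K t1 t2 i j = cauchy_int2 (Aint K t1 t2 i j).
Proof. unfold Amat, Aint. destruct (Nat.ltb i K); reflexivity. Qed.

Lemma outside_unit_neq (u : Cx) :
  outside_unit u -> u <> C0 /\ Csub u C1 <> C0 /\ Cadd u C1 <> C0.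
Proof.
 destruct u as [a b]; unfold outside_unit, Csub, Cadd, Copp, C1, C0; simpl; intros h.
 repeat split; intro e; injection e; intros; nra.
Qed.

Lemma Cexp0 : Cexp C0 = C1.
Proof. unfold Cexp, C0, C1; simpl. rewrite exp_0, cos_0, sin_0. f_equal; ring. Qed.

Lemma RtoC_m2 : RtoC (-2) = Copp (Cadd C1 C1).
Proof. unfold RtoC, Copp, Cadd, C1; simpl; f_equal; lra. Qed.

Module Algebra.
Import mathcomp.boot.all_boot mathcomp.algebra.all_algebra.
Import mathcomp.reals_stdlib.Rstruct mathcomp.real_closed.complex.
Import mathcomp.zify.zify mathcomp.algebra_tactics.ring.
Local Set Implicit Arguments. Local Unset Strict Implicit. Local Unset Printing Implicit Defensive.
Import GRing.Theory Num.Theory.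
Local Open Scope ring_scope.
Local Open Scope complex_scope.

Notation CC := (Rdefinitions.R[i]).

Definition toC (z : Cx) : CC := (fst z) +i* (snd z).
Definition ofC (c : CC) : Cx := (complex.Re c, complex.Im c).

Lemma toC_inj z w : toC z = toC w -> z = w.
Proof. case: z => a b; case: w => c d; rewrite /toC /=; case=> -> ->; done. Qed.
Lemma toC_ofC c : toC (ofC c) = c. Proof. by case: c. Qed.
Lemma toC_add z w : toC (Cadd z w) = toC z + toC w. Proof. by case: z => a b; case: w. Qed.
Lemma toC_opp z : toC (Copp z) = - toC z. Proof. by case: z. Qed.
Lemma toC_sub z w : toC (Csub z w) = toC z - toC w. Proof. by rewrite /Csub toC_add toC_opp. Qed.
Lemma toC_mul z w : toC (Cmul z w) = toC z * toC w. Proof. by case: z => a b; case: w. Qed.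
Lemma toC_C0 : toC C0 = 0. Proof. by []. Qed.
Lemma toC_C1 : toC C1 = 1. Proof. by []. Qed.
Lemma toC_inv z : toC (Cinv z) = (toC z)^-1.
Proof. case: z => a b; rewrite /toC /Cinv /=. congr (_ +i* _). by rewrite !RealsE mulNr. Qed.
Lemma toC_div z w : toC (Cdiv z w) = toC z / toC w. Proof. by rewrite /Cdiv toC_mul toC_inv. Qed.
Lemma toC_pow z n : toC (Cpow z n) = toC z ^+ n.
Proof. elim: n => [|n IH] //=. by rewrite toC_mul IH exprS. Qed.

Definition toCE := (toC_add, toC_sub, toC_opp, toC_mul, toC_div, toC_inv, toC_pow, toC_C0, toC_C1).

Lemma toC_Csum n F : toC (Csum n F) = \sum_(j < n) toC (F j).
Proof.
 have shifted s : toC (fold_right Cadd C0 (map F (List.seq s n)))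
                 = \sum_(j < n) toC (F (s + j)%N).
 { elim: n s => [|n IH] s /=; first by rewrite big_ord0.
   rewrite toC_add IH big_ord_recl addn0. congr (_ + _).
   apply: eq_bigr => i _. by rewrite /= addSnnS. }
 exact: shifted 0%N.
Qed.

Lemma toC_eq0 z : toC z = 0 -> z = C0.
Proof. move=> h; apply: toC_inj; by rewrite h toC_C0. Qed.

Lemma Cnonzero_toC z : toC z != 0 -> Cnonzero z.
Proof.
 move=> h hz. move: h; apply/negP; rewrite negbK; apply/eqP.
 case: z hz => a b /= hz. have [ha hb] : a = 0%R /\ b = 0%R by apply Rplus_sqr_eq_0.
 by rewrite /toC /= ha hb.
Qed.

Lemma toC_outside_unit u : outside_unit u ->
  [/\ toC u != 0, toC u - 1 != 0 & toC u + 1 != 0].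
Proof.
 move=> /outside_unit_neq [h0 [h1 h2]]. split; apply/eqP => e.
 - exact: h0 (toC_eq0 e).
 - apply: h1; apply: toC_eq0. by rewrite toC_sub toC_C1.
 - apply: h2; apply: toC_eq0. by rewrite toC_add toC_C1.
Qed.

Lemma ltb_ltn k j : Nat.ltb k j = (k < j)%N.
Proof.
 case: (ltnP k j) => H.
 - apply Nat.ltb_lt; apply/ltP; exact H.
 - apply Nat.ltb_ge; apply/leP; exact H.
Qed.

Definition mx_of n (M : nat -> nat -> Cx) : 'M[CC]_n := \matrix_(i < n, j < n) toC (M i j).

Lemma toC_det n M : toC (det n M) = \det (mx_of n M).
Proof.
 elim: n M => [|n IH] M; first by rewrite det_mx00.
 rewrite (expand_det_row _ ord0) /= toC_Csum. apply: eq_bigr => j _.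
 rewrite !toC_mul toC_pow toC_opp toC_C1 IH /cofactor /mx_of mxE add0n.
 rewrite -mulrA mulrC -mulrA. congr (_ * _). rewrite mulrC. congr (_ * _).
 congr (\det _). apply/matrixP => i k; rewrite !mxE /minor0 ltb_ltn /=.
 congr (toC (M _ _)). rewrite /bump. by case: ltnP => H; rewrite ?add0n ?add1n.
Qed.

(* Determinant of an anti-triangular matrix with unit antidiagonal: the sign
   of the order-reversing permutation, computed recursively. *)
Fixpoint antidiag_sign (n : nat) : CC :=
  match n with 0%N => 1 | S m => (-1) ^+ m * antidiag_sign m end.

Lemma det_antidiag n (M : 'M[CC]_n) :
  (forall i j : 'I_n, (i + j < n.-1)%N -> M i j = 0) ->
  (forall i j : 'I_n, (i + j = n.-1)%N -> M i j = 1) -> \det M = antidiag_sign n.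
Proof.
 elim: n M => [|n IH] M h0 h1; first by rewrite det_mx00.
 rewrite (expand_det_row _ ord0) (bigD1 ord_max) //= big1.
 - rewrite addr0 h1 /= ?add0n // mul1r /cofactor add0n /=. congr (_ * _).
   apply: IH => i j hij; rewrite !mxE.
   + apply: h0. rewrite /= /bump /= (leqNgt n j) (ltn_ord j) /=. lia.
   + apply: h1. rewrite /= /bump /= (leqNgt n j) (ltn_ord j) /=.
     have := ltn_ord i. lia.
 - move=> j hj. rewrite h0 ?mul0r //= add0n.
   have := ltn_ord j. move: hj. case: j => j hj' /= hne hj.
   have : j != n by apply: contraNneq hne => e; rewrite -val_eqE /= e.
   lia.
Qed.

Lemma antidiag_sign_double K : antidiag_sign (K + K) = (-1) ^+ K.
Proof.
 elim: K => [|K IH] //. rewrite addSn addnS /= IH -!exprD exprS.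
 rewrite -exprS -[LHS]signr_odd -[RHS]signr_odd; congr (_ ^+ _).
 rewrite /= !oddD. by case: (odd K).
Qed.

Definition two : CC := 2%:R.
Definition change_poly (K i : nat) : {poly CC} :=
  if (i < K)%N then ('X + 1) ^+ i * ('X + two%:P) ^+ K else ('X + 1) ^+ (i - K) * 'X^K.
Definition change_mx (K : nat) : 'M[CC]_(K + K) := \matrix_(i, m) (change_poly K i)`_m.

Definition pascal_mx K : 'M[CC]_K := \matrix_(i, k) ('C(i, k))%:R.
Definition shift_mx K : 'M[CC]_K := \matrix_(k, m) ('X^k * ('X + two%:P) ^+ K)`_m.

Lemma coef_X1pow i k : (('X + 1 : {poly CC}) ^+ i)`_k = ('C(i, k))%:R.
Proof.
 rewrite exprD1n coef_sum.
 under eq_bigr => l _ do rewrite coefMn coefXn.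
 case: (leqP k i) => hk.
 - rewrite (bigD1 (Ordinal (hk : (k < i.+1)%N))) //= eqxx big1 ?addr0 //.
   move=> l hl. have -> : (k == l :> nat) = false.
   { apply/negP => /eqP e. move: hl. apply/negP; rewrite negbK. apply/eqP. by apply: val_inj. }
   by rewrite mul0rn.
 - rewrite bin_small // big1 // => l _. have -> : (k == l :> nat) = false.
   { apply/negP => /eqP e. have := ltn_ord l. lia. }
   by rewrite mul0rn.
Qed.

Lemma X1pow_wide K (i : 'I_K) : (('X + 1 : {poly CC}) ^+ i) = \sum_(k < K) 'X^k *+ 'C(i, k).
Proof.
 rewrite exprD1n (big_ord_widen K (fun k => 'X^k *+ 'C(i, k))) //.
 rewrite big_mkcond /=. apply: eq_bigr => k _. case: ifP => // hk.
 by rewrite bin_small ?mulr0n // ltnNge -ltnS hk.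
Qed.

Lemma change_mx_dl K : dlsubmx (change_mx K) = 0.
Proof.
 apply/matrixP => i j; rewrite !mxE /change_poly /=.
 have -> : (K + i < K)%N = false by lia.
 by rewrite coefMXn ltn_ord.
Qed.

Lemma change_mx_dr K : drsubmx (change_mx K) = pascal_mx K.
Proof.
 apply/matrixP => i k; rewrite !mxE /change_poly /=.
 have -> : (K + i < K)%N = false by lia.
 rewrite coefMXn. have -> : (K + k < K)%N = false by lia.
 by rewrite !addKn coef_X1pow.
Qed.

Lemma change_mx_ul K : ulsubmx (change_mx K) = pascal_mx K *m shift_mx K.
Proof.
 apply/matrixP => i m; rewrite !mxE /change_poly /= ltn_ord X1pow_wide mulr_suml coef_sum.
 apply: eq_bigr => k _. by rewrite mulrnAl (coefMn (R:=CC)) !mxE mulr_natl.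
Qed.

Lemma det_pascal_mx K : \det (pascal_mx K) = 1.
Proof.
 rewrite det_trig.
 - by apply: big1 => i _; rewrite mxE binn.
 - apply/is_trig_mxP => i k hik. by rewrite mxE bin_small.
Qed.

Lemma det_shift_mx K : \det (shift_mx K) = two ^+ (K * K).
Proof.
 rewrite -det_tr det_trig.
 - rewrite (eq_bigr (fun _ => two ^+ K)); first by rewrite prodr_const card_ord -exprM.
   move=> i _. rewrite !mxE coefXnM ltnn subnn -horner_coef0 horner_exp.
   by rewrite !hornerE.
 - apply/is_trig_mxP => i k hik. by rewrite !mxE coefXnM hik.
Qed.

Lemma det_change_mx K : \det (change_mx K) = two ^+ (K * K).
Proof.
 rewrite -(submxK (change_mx K)) change_mx_dl det_ublock change_mx_dr change_mx_ul.
 by rewrite det_mulmx det_pascal_mx det_shift_mx mul1r mulr1.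
Qed.

Definition change_coef K i m : Cx := ofC ((change_poly K i)`_m).

Lemma size_X_add_pow (c : CC) n : (size (('X + c%:P : {poly CC}) ^+ n) <= n.+1)%N.
Proof. apply: (leq_trans (size_poly_exp_leq _ _)). by rewrite size_XaddC /= mul1n. Qed.

Lemma size_change_poly K i : (i < K + K)%N -> (size (change_poly K i) <= K + K)%N.
Proof.
 move=> hi. rewrite /change_poly. have s1 := size_X_add_pow 1. rewrite polyC1 in s1.
 case: ifP => h; apply: (leq_trans (size_polyMleq _ _)).
 - have s2 := size_X_add_pow two K.
   apply: leq_trans (_ : _ <= (i.+1 + K.+1).-1)%N _; last by lia.
   by rewrite -!subn1 leq_sub2r // leq_add.
 - rewrite size_polyXn.
   apply: leq_trans (_ : _ <= ((i - K).+1 + K.+1).-1)%N _; last by lia.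
   by rewrite -!subn1 leq_sub2r // leq_add.
Qed.

Lemma Aint_expand K t1 t2 i j u : (i < K + K)%coq_nat -> outside_unit u ->
  Aint K t1 t2 i j u = Csum (K + K) (fun m => Cmul (change_coef K i m) (gterm K t1 t2 m j u)).
Proof.
 move=> /ltP hi /toC_outside_unit [h0 h1 h2]. apply: toC_inj. rewrite toC_Csum.
 under eq_bigr => m _ do rewrite toC_mul toC_ofC /gterm !toCE.
 set E := toC (weight _ _ _). set v := toC u.
 have nA : (v - 1) ^+ K != 0 by rewrite expf_neq0.
 have nB : (v + 1) ^+ K != 0 by rewrite expf_neq0.
 transitivity ((change_poly K i).[v - 1] * (v ^+ j * E / ((v - 1) ^+ K * (v + 1) ^+ K))).
 2: { rewrite (horner_coef_wide _ (size_change_poly hi)) mulr_suml.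
      apply: eq_bigr => m _. field. by rewrite nA nB. }
 have e1 : v - 1 + 1 = v by ring.
 rewrite /Aint /change_poly ltb_ltn. case: ifP => hK.
 - rewrite hornerM !horner_exp !hornerD hornerX !hornerC /two e1.
   rewrite (_ : v - 1 + 2%:R = v + 1); last by ring.
   rewrite !toCE -/E -/v plusE exprD. field. by rewrite nA nB.
 - rewrite hornerM horner_exp hornerD hornerX hornerC hornerXn e1.
   rewrite !toCE -/E -/v !plusE exprD. field. by rewrite nA nB.
Qed.

Lemma inv_exponent_inv (t1 t2 u : Cx) : toC u != 0 -> toC u - 1 != 0 -> toC u + 1 != 0 ->
  inv_exponent t1 t2 (Cinv u) = Cadd (Cdiv t1 (Csub u C1)) (Cdiv t2 (Cadd u C1)).
Proof.
 move=> h0 h1 h2. apply: toC_inj. rewrite /inv_exponent !toCE.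
 have e1 : 1 - (toC u)^-1 = (toC u - 1) / toC u by field.
 have e2 : 1 + (toC u)^-1 = (toC u + 1) / toC u by field.
 rewrite e1 e2. field. by rewrite h0 h1 h2.
Qed.

Lemma qterm_inv K t1 t2 m j d (u : Cx) : (m + j + 1 + d = K + K)%coq_nat -> outside_unit u ->
  qterm K t1 t2 m d (Cinv u) = Cmul u (gterm K t1 t2 m j u).
Proof.
 move=> hK /toC_outside_unit [h0 h1 h2].
 rewrite /qterm /gterm inv_exponent_inv // /weight. apply: toC_inj. rewrite !toCE.
 set E := toC (Cexp _). set v := toC u.
 have e1 : 1 - v^-1 = (v - 1) / v by field.
 have e2 : 1 + v^-1 = (v + 1) / v by field.
 rewrite e1 e2 !expr_div_n exprVn.
 have hW : v ^+ K * v ^+ K = v ^+ m * v ^+ d * (v * v ^+ j).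
 { rewrite -!exprD -exprS -!exprD; congr (_ ^+ _); lia. }
 have nA : (v - 1) ^+ K != 0 by rewrite expf_neq0.
 have nB : (v + 1) ^+ K != 0 by rewrite expf_neq0.
 have nW : v ^+ K != 0 by rewrite expf_neq0.
 have nm : v ^+ m != 0 by rewrite expf_neq0.
 have nd : v ^+ d != 0 by rewrite expf_neq0.
 transitivity ((v - 1) ^+ m * E * (v ^+ K * v ^+ K) / (v ^+ m * v ^+ d * (v - 1) ^+ K * (v + 1) ^+ K)).
 { field. by rewrite nA nB nW nm nd. }
 rewrite hW. field. by rewrite ?nA ?nB ?nW ?nm ?nd ?h0.
Qed.

Lemma qterm_at0 K t1 t2 m d :
  qterm K t1 t2 m d C0 = match d with O => C1 | S _ => C0 end.
Proof.
 have hE : inv_exponent t1 t2 C0 = C0.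
 { apply: toC_inj. rewrite /inv_exponent !toCE. by rewrite !mulr0 !mul0r addr0. }
 apply: toC_inj. rewrite /qterm hE Cexp0 !toCE subr0 addr0 !expr1n !mul1r divr1 mulr1.
 by case: d => [|d]; rewrite ?expr0 ?expr0n toCE.
Qed.

Lemma Cnonzero_sub1 u : outside_unit u -> Cnonzero (Csub u C1).
Proof. move=> /toC_outside_unit [_ h _]. apply: Cnonzero_toC. by rewrite !toCE. Qed.
Lemma Cnonzero_add1 u : outside_unit u -> Cnonzero (Cadd u C1).
Proof. move=> /toC_outside_unit [_ _ h]. apply: Cnonzero_toC. by rewrite !toCE. Qed.
Lemma Cnonzero_gterm_den K u : outside_unit u ->
  Cnonzero (Cmul (Cpow (Csub u C1) K) (Cpow (Cadd u C1) K)).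
Proof.
 move=> /toC_outside_unit [_ h1 h2]. apply: Cnonzero_toC.
 by rewrite !toCE mulf_neq0 // expf_neq0.
Qed.
Lemma Cnonzero_1sub0 : Cnonzero (Csub C1 C0).
Proof. apply: Cnonzero_toC. by rewrite !toCE subr0 oner_neq0. Qed.
Lemma Cnonzero_1add0 : Cnonzero (Cadd C1 C0).
Proof. apply: Cnonzero_toC. by rewrite !toCE addr0 oner_neq0. Qed.
Lemma Cnonzero_qterm_den K : Cnonzero (Cmul (Cpow (Csub C1 C0) K) (Cpow (Cadd C1 C0) K)).
Proof. apply: Cnonzero_toC. by rewrite !toCE subr0 addr0 !expr1n mulr1 oner_neq0. Qed.

Lemma det_Amat_factor K t1 t2 (H : nat -> nat -> Cx) :
  (forall i j, (i < K + K)%coq_nat -> (j < K + K)%coq_nat ->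
     Amat K t1 t2 i j = Csum (K + K) (fun m => Cmul (change_coef K i m) (H m j))) ->
  (forall m j, (m + j < Nat.pred (K + K))%coq_nat -> H m j = C0) ->
  (forall m j, (m + j = Nat.pred (K + K))%coq_nat -> H m j = C1) ->
  det (K + K) (Amat K t1 t2) = Cpow (RtoC (-2)) (K * K).
Proof.
 move=> hA h0 h1. apply: toC_inj. rewrite toC_det.
 have -> : mx_of (K + K) (Amat K t1 t2)
         = change_mx K *m \matrix_(m < K + K, j < K + K) toC (H m j).
 { apply/matrixP => i j. rewrite !mxE hA; try exact/ltP. rewrite toC_Csum.
   apply: eq_bigr => m _. by rewrite toC_mul toC_ofC !mxE. }
 rewrite det_mulmx det_change_mx (@det_antidiag (K + K)).
 - rewrite antidiag_sign_double toC_pow RtoC_m2 !toCE.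
   have -> : (1 + 1 : CC) = two by rewrite /two mulrS mulr1n.
   rewrite mulrC -[in RHS]mulN1r exprMn. congr (_ * _).
   by rewrite -[LHS]signr_odd -[RHS]signr_odd oddM andbb.
 - move=> i j /ltP hij. by rewrite mxE h0 // toC_C0.
 - move=> i j hij. by rewrite mxE h1 // toC_C1.
Qed.

End Algebra.

Module Analysis.
Import Coquelicot.Coquelicot.
Import Defs Algebra.
Notation CRInt := Coquelicot.RInt.RInt.
Local Open Scope R_scope.

Lemma Cx_eq (a b : Cx) : fst a = fst b -> snd a = snd b -> a = b.
Proof. destruct a, b; simpl; intros -> ->; reflexivity. Qed.

(* Continuity rules for real-valued functions, with Coquelicot's module
   structures on R fixed once and for all. *)
Lemma cont_mul {U : UniformSpace} (f g : U -> R) x : continuous f x -> continuous g x ->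
  continuous (fun y => f y * g y) x.
Proof. intros; apply (continuous_mult (K:=R_AbsRing)); auto. Qed.
Lemma cont_plus {U : UniformSpace} (f g : U -> R) x : continuous f x -> continuous g x ->
  continuous (fun y => f y + g y) x.
Proof. intros; apply (continuous_plus (V:=R_NormedModule)); auto. Qed.
Lemma cont_minus {U : UniformSpace} (f g : U -> R) x : continuous f x -> continuous g x ->
  continuous (fun y => f y - g y) x.
Proof. intros; apply (continuous_minus (V:=R_NormedModule)); auto. Qed.
Lemma cont_opp {U : UniformSpace} (f : U -> R) x : continuous f x ->
  continuous (fun y => - f y) x.
Proof. intros; apply (continuous_opp (V:=R_NormedModule)); auto. Qed.
Lemma cont_comp1 {U : UniformSpace} (f : U -> R) (g : R -> R) x : continuous f x -> continuous g (f x) ->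
  continuous (fun y => g (f y)) x.
Proof. intros; apply (continuous_comp f g); auto. Qed.
Lemma cont_div {U : UniformSpace} (f g : U -> R) x : continuous f x -> continuous g x -> g x <> 0 ->
  continuous (fun y => f y / g y) x.
Proof. intros; unfold Rdiv; apply cont_mul; auto.
  apply (cont_comp1 g (fun z => / z)); auto. apply continuous_Rinv; auto. Qed.


Definition ccont {U : UniformSpace} (f : U -> Cx) (x : U) :=
  continuous (fun y => fst (f y)) x /\ continuous (fun y => snd (f y)) x.

Lemma ccont_const {U : UniformSpace} (c : Cx) (x : U) : ccont (fun _ => c) x.
Proof. split; apply continuous_const. Qed.

Lemma ccont_id (x : Cx) : ccont (U := prod_UniformSpace R_UniformSpace R_UniformSpace) (fun y => y) x.
Proof. destruct x; split; [apply continuous_fst | apply continuous_snd]. Qed.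

Lemma ccont_add {U : UniformSpace} (f g : U -> Cx) x : ccont f x -> ccont g x -> ccont (fun y => Cadd (f y) (g y)) x.
Proof. intros [? ?] [? ?]; split; simpl; apply (continuous_plus (V:=R_NormedModule)); auto. Qed.

Lemma ccont_opp {U : UniformSpace} (f : U -> Cx) x : ccont f x -> ccont (fun y => Copp (f y)) x.
Proof. intros [? ?]; split; simpl; apply (continuous_opp (V:=R_NormedModule)); auto. Qed.

Lemma ccont_sub {U : UniformSpace} (f g : U -> Cx) x : ccont f x -> ccont g x -> ccont (fun y => Csub (f y) (g y)) x.
Proof. intros; apply ccont_add; auto; apply ccont_opp; auto. Qed.

Lemma ccont_mul {U : UniformSpace} (f g : U -> Cx) x : ccont f x -> ccont g x -> ccont (fun y => Cmul (f y) (g y)) x.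
Proof. intros [? ?] [? ?]; split; simpl.
 apply cont_minus; apply cont_mul; auto.
 apply cont_plus; apply cont_mul; auto. Qed.


Lemma ccont_inv {U : UniformSpace} (f : U -> Cx) x : ccont f x -> Cnonzero (f x) -> ccont (fun y => Cinv (f y)) x.
Proof. intros [H H0] Hn.
 assert (Hd : continuous (fun y => fst (f y) * fst (f y) + snd (f y) * snd (f y)) x).
 { apply cont_plus; apply cont_mul; auto. }
 split; unfold Cinv; cbv zeta; cbn [fst snd].
 - exact (cont_div (fun y => fst (f y)) _ x H Hd Hn).
 - exact (cont_div (fun y => - snd (f y)) _ x (cont_opp _ x H0) Hd Hn).
Qed.

Lemma ccont_div {U : UniformSpace} (f g : U -> Cx) x : ccont f x -> ccont g x -> Cnonzero (g x) -> ccont (fun y => Cdiv (f y) (g y)) x.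
Proof. intros; unfold Cdiv; apply ccont_mul; auto; apply ccont_inv; auto. Qed.

Lemma ccont_exp {U : UniformSpace} (f : U -> Cx) x : ccont f x -> ccont (fun y => Cexp (f y)) x.
Proof. intros [? ?]; split; simpl; apply cont_mul.
 apply (cont_comp1 _ exp); auto; apply continuous_exp.
 apply (cont_comp1 _ cos); auto; apply continuous_cos.
 apply (cont_comp1 _ exp); auto; apply continuous_exp.
 apply (cont_comp1 _ sin); auto; apply continuous_sin. Qed.

Lemma ccont_pow {U : UniformSpace} (f : U -> Cx) x n : ccont f x -> ccont (fun y => Cpow (f y) n) x.
Proof. intros H; induction n; simpl. apply ccont_const. apply ccont_mul; auto. Qed.

Lemma ccont_comp {U : UniformSpace} (f : U -> Cx) (G : Cx -> Cx) x :
  ccont f x -> ccont (U := prod_UniformSpace R_UniformSpace R_UniformSpace) G (f x) -> ccont (fun y => G (f y)) x.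
Proof. intros [H1 H2] [G1 G2]; split.
 - apply (continuous_ext (fun y => fst (G (fst (f y), snd (f y))))).
   { intro y; rewrite <- surjective_pairing; reflexivity. }
   apply (continuous_comp_2 (fun y => fst (f y)) (fun y => snd (f y)) (fun a b => fst (G (a,b)))); auto.
   eapply continuous_ext. 2: rewrite <- surjective_pairing; exact G1.
   intros [a b]; reflexivity.
 - apply (continuous_ext (fun y => snd (G (fst (f y), snd (f y))))).
   { intro y; rewrite <- surjective_pairing; reflexivity. }
   apply (continuous_comp_2 (fun y => fst (f y)) (fun y => snd (f y)) (fun a b => snd (G (a,b)))); auto.
   eapply continuous_ext. 2: rewrite <- surjective_pairing; exact G2.
   intros [a b]; reflexivity.
Qed.

Definition has_deriv (f : R -> Cx) (x : R) (d : Cx) :=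
  is_derive (fun t => fst (f t)) x (fst d) /\ is_derive (fun t => snd (f t)) x (snd d).

Lemma isd_val (f : R -> R) x l l' : is_derive f x l -> l = l' -> is_derive f x l'.
Proof. intros H ->; exact H. Qed.
Lemma isd_mul (f g : R -> R) x df dg : is_derive f x df -> is_derive g x dg ->
  is_derive (fun t => f t * g t) x (df * g x + f x * dg).
Proof. intros; apply (is_derive_mult (K:=R_AbsRing)); auto. intros; apply Rmult_comm. Qed.
Lemma isd_plus (f g : R -> R) x df dg : is_derive f x df -> is_derive g x dg ->
  is_derive (fun t => f t + g t) x (df + dg).
Proof. intros; apply (is_derive_plus (V:=R_NormedModule)); auto. Qed.
Lemma isd_minus (f g : R -> R) x df dg : is_derive f x df -> is_derive g x dg ->
  is_derive (fun t => f t - g t) x (df - dg).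
Proof. intros; apply (is_derive_minus (V:=R_NormedModule)); auto. Qed.
Lemma isd_opp (f : R -> R) x df : is_derive f x df ->
  is_derive (fun t => - f t) x (- df).
Proof. intros; apply (is_derive_opp (V:=R_NormedModule)); auto. Qed.
Lemma isd_const (c x : R) : is_derive (fun _ => c) x 0.
Proof. apply (is_derive_const (V:=R_NormedModule)). Qed.
Lemma isd_comp (f g : R -> R) x df dg : is_derive g x dg -> is_derive f (g x) df ->
  is_derive (fun t => f (g t)) x (dg * df).
Proof. intros; apply (is_derive_comp (V:=R_NormedModule)); auto. Qed.


Lemma has_deriv_const (c : Cx) x : has_deriv (fun _ => c) x C0.
Proof. split; apply isd_const. Qed.

Lemma has_deriv_add f g x df dg : has_deriv f x df -> has_deriv g x dg -> has_deriv (fun t => Cadd (f t) (g t)) x (Cadd df dg).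
Proof. intros [? ?] [? ?]; split; simpl; apply isd_plus; auto. Qed.

Lemma has_deriv_opp f x df : has_deriv f x df -> has_deriv (fun t => Copp (f t)) x (Copp df).
Proof. intros [? ?]; split; simpl; apply isd_opp; auto. Qed.

Lemma has_deriv_mul f g x df dg : has_deriv f x df -> has_deriv g x dg ->
  has_deriv (fun t => Cmul (f t) (g t)) x (Cadd (Cmul df (g x)) (Cmul (f x) dg)).
Proof. intros [H1 H2] [G1 G2]; split; simpl.
 - eapply isd_val; [apply isd_minus; apply isd_mul; eauto | simpl; ring].
 - eapply isd_val; [apply isd_plus; apply isd_mul; eauto | simpl; ring].
Qed.

Lemma has_deriv_inv f x df : has_deriv f x df -> Cnonzero (f x) ->
  has_deriv (fun t => Cinv (f t)) x (Copp (Cmul (Cmul (Cinv (f x)) (Cinv (f x))) df)).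
Proof. intros [H1 H2] Hn; unfold Cnonzero in Hn.
 assert (Hd : is_derive (fun t => fst (f t) * fst (f t) + snd (f t) * snd (f t)) x
    ((fst df * fst (f x) + fst (f x) * fst df) + (snd df * snd (f x) + snd (f x) * snd df))).
 { apply isd_plus; apply isd_mul; auto. }
 split; unfold Cinv; cbv zeta; cbn [fst snd].
 - eapply isd_val; [apply is_derive_div; [exact H1 | exact Hd | exact Hn] | simpl; field; auto].
 - eapply isd_val; [apply is_derive_div; [apply isd_opp; exact H2 | exact Hd | exact Hn] | simpl; field; auto].
Qed.

Lemma has_deriv_exp f x df : has_deriv f x df -> has_deriv (fun t => Cexp (f t)) x (Cmul (Cexp (f x)) df).
Proof. intros [H1 H2]; split; unfold Cexp; cbn [fst snd].
 - eapply isd_val. apply isd_mul.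
   apply (isd_comp exp); [exact H1 | apply is_derive_Reals, derivable_pt_lim_exp].
   apply (isd_comp cos); [exact H2 | apply is_derive_Reals, derivable_pt_lim_cos].
   simpl; ring.
 - eapply isd_val. apply isd_mul.
   apply (isd_comp exp); [exact H1 | apply is_derive_Reals, derivable_pt_lim_exp].
   apply (isd_comp sin); [exact H2 | apply is_derive_Reals, derivable_pt_lim_sin].
   simpl; ring.
Qed.

(* Holomorphy on a region P, in the weak form we need: G is continuous on P
   and has a continuous complex derivative G' along every differentiable
   curve in P (chain rule). *)
Definition ccont_on (G : Cx -> Cx) (P : Cx -> Prop) :=
  forall u, P u -> ccont (U := prod_UniformSpace R_UniformSpace R_UniformSpace) G u.

Definition cderiv_on (G G' : Cx -> Cx) (P : Cx -> Prop) :=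
  forall (g : R -> Cx) x d, P (g x) -> has_deriv g x d ->
    has_deriv (fun t => G (g t)) x (Cmul (G' (g x)) d).

Definition holo_on (G : Cx -> Cx) (P : Cx -> Prop) :=
  ccont_on G P /\ exists G', ccont_on G' P /\ cderiv_on G G' P.

Lemma has_deriv_val f x d d' : has_deriv f x d -> d = d' -> has_deriv f x d'.
Proof. intros H ->; exact H. Qed.

Lemma holo_on_const c P : holo_on (fun _ => c) P.
Proof. split. intros u _; apply ccont_const. exists (fun _ => C0); split.
 intros u _; apply ccont_const.
 intros g x d _ _. eapply has_deriv_val. apply has_deriv_const. apply Cx_eq; simpl; ring. Qed.

Lemma holo_on_id P : holo_on (fun u => u) P.
Proof. split. intros u _; apply ccont_id. exists (fun _ => C1); split.
 intros u _; apply ccont_const.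
 intros g x d _ H. eapply has_deriv_val. exact H. apply Cx_eq; simpl; ring. Qed.

Lemma holo_on_add F G P : holo_on F P -> holo_on G P -> holo_on (fun u => Cadd (F u) (G u)) P.
Proof. intros [Fc [F' [F'c Fd]]] [Gc [G' [G'c Gd]]]; split.
 intros u Hu; apply ccont_add; auto.
 exists (fun u => Cadd (F' u) (G' u)); split.
 intros u Hu; apply ccont_add; auto.
 intros g x d Hp Hg. eapply has_deriv_val. apply has_deriv_add; [apply Fd | apply Gd]; eauto.
 apply Cx_eq; simpl; ring. Qed.

Lemma holo_on_opp F P : holo_on F P -> holo_on (fun u => Copp (F u)) P.
Proof. intros [Fc [F' [F'c Fd]]]; split.
 intros u Hu; apply ccont_opp; auto.
 exists (fun u => Copp (F' u)); split.
 intros u Hu; apply ccont_opp; auto.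
 intros g x d Hp Hg. eapply has_deriv_val. apply has_deriv_opp; apply Fd; eauto.
 apply Cx_eq; simpl; ring. Qed.

Lemma holo_on_sub F G P : holo_on F P -> holo_on G P -> holo_on (fun u => Csub (F u) (G u)) P.
Proof. intros; unfold Csub; apply holo_on_add; auto; apply holo_on_opp; auto. Qed.

Lemma holo_on_mul F G P : holo_on F P -> holo_on G P -> holo_on (fun u => Cmul (F u) (G u)) P.
Proof. intros [Fc [F' [F'c Fd]]] [Gc [G' [G'c Gd]]]; split.
 intros u Hu; apply ccont_mul; auto.
 exists (fun u => Cadd (Cmul (F' u) (G u)) (Cmul (F u) (G' u))); split.
 intros u Hu; apply ccont_add; apply ccont_mul; auto.
 intros g x d Hp Hg. eapply has_deriv_val. apply has_deriv_mul; [apply Fd | apply Gd]; eauto.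
 apply Cx_eq; simpl; ring. Qed.

Lemma holo_on_inv F P : holo_on F P -> (forall u, P u -> Cnonzero (F u)) -> holo_on (fun u => Cinv (F u)) P.
Proof. intros [Fc [F' [F'c Fd]]] Hn; split.
 intros u Hu; apply ccont_inv; auto.
 exists (fun u => Copp (Cmul (Cmul (Cinv (F u)) (Cinv (F u))) (F' u))); split.
 intros u Hu; apply ccont_opp; apply ccont_mul; auto; apply ccont_mul; apply ccont_inv; auto.
 intros g x d Hp Hg. eapply has_deriv_val. apply has_deriv_inv. apply Fd; eauto. auto.
 apply Cx_eq; simpl; ring. Qed.

Lemma holo_on_div F G P : holo_on F P -> holo_on G P -> (forall u, P u -> Cnonzero (G u)) -> holo_on (fun u => Cdiv (F u) (G u)) P.
Proof. intros; unfold Cdiv; apply holo_on_mul; auto; apply holo_on_inv; auto. Qed.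

Lemma holo_on_exp F P : holo_on F P -> holo_on (fun u => Cexp (F u)) P.
Proof. intros [Fc [F' [F'c Fd]]]; split.
 intros u Hu; apply ccont_exp; auto.
 exists (fun u => Cmul (Cexp (F u)) (F' u)); split.
 intros u Hu; apply ccont_mul; auto; apply ccont_exp; auto.
 intros g x d Hp Hg. eapply has_deriv_val. apply has_deriv_exp; apply Fd; eauto.
 apply Cx_eq; simpl; ring. Qed.

Lemma holo_on_pow F P n : holo_on F P -> holo_on (fun u => Cpow (F u) n) P.
Proof. intros H; induction n; simpl. apply holo_on_const. apply holo_on_mul; auto. Qed.



Definition is_component (pr : Cx -> R) := pr = fst \/ pr = snd.

Lemma has_deriv_pr pr f x d :
  is_component pr -> has_deriv f x d -> is_derive (fun t => pr (f t)) x (pr d).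
Proof. intros [-> | ->] [? ?]; auto. Qed.

Lemma ccont_pr {U : UniformSpace} pr (f : U -> Cx) x :
  is_component pr -> ccont f x -> continuous (fun y => pr (f y)) x.
Proof. intros [-> | ->] [? ?]; auto. Qed.

Lemma cont_fst2 (z : R * R) : continuous (U:=R_UniformSpace) (fun p : R * R => fst p) z.
Proof. destruct z; apply continuous_fst. Qed.
Lemma cont_snd2 (z : R * R) : continuous (U:=R_UniformSpace) (fun p : R * R => snd p) z.
Proof. destruct z; apply continuous_snd. Qed.
Lemma cont_idR (x : R) : continuous (U:=R_UniformSpace) (fun y : R => y) x.
Proof. apply continuous_id. Qed.

Lemma locally_interval a b x : a < x < b -> locally x (fun y => a < y < b).
Proof.
 intros [H1 H2].
 assert (He : 0 < Rmin (x - a) (b - x)) by (apply Rmin_glb_lt; lra).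
 exists (mkposreal _ He); intros y Hy.
 change (Rabs (y - x) < Rmin (x - a) (b - x)) in Hy.
 pose proof (Rmin_l (x - a) (b - x)); pose proof (Rmin_r (x - a) (b - x)).
 apply Rabs_def2 in Hy; lra.
Qed.

Lemma locally_fst (s0 t : R) (P : R -> Prop) :
  locally s0 P -> locally (s0, t) (fun z : R * R => P (fst z)).
Proof. intros H. apply (cont_fst2 (s0, t)). exact H. Qed.

Lemma RInt_eq (f : R -> R) a b : ex_RInt f a b -> Defs.RInt f a b = CRInt f a b.
Proof.
 intros H. unfold Defs.RInt.
 destruct (excluded_middle_informative _) as [h|h].
 - rewrite (RInt_Reals f a b (epsilon h (fun _ => True))). reflexivity.
 - exfalso; apply h; constructor; apply ex_RInt_Reals_0; exact H.
Qed.

Definition circ (s th : R) : Cx := (cos th / s, sin th / s).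
Definition circ_ds (s th : R) : Cx := (- cos th / (s * s), - sin th / (s * s)).
Definition circ_dth (s th : R) : Cx := (- sin th / s, cos th / s).

Lemma has_deriv_circ_s s th : s <> 0 -> has_deriv (fun s => circ s th) s (circ_ds s th).
Proof.
 intros Hs; split; unfold circ, circ_ds; simpl.
 - auto_derive; auto. field; auto.
 - auto_derive; auto. field; auto.
Qed.

Lemma has_deriv_circ_th s th : s <> 0 -> has_deriv (fun th => circ s th) th (circ_dth s th).
Proof.
 intros Hs; split; unfold circ, circ_dth; simpl.
 - auto_derive; auto. field; auto.
 - auto_derive; auto. field; auto.
Qed.

Lemma circ_norm2 s th : s <> 0 ->
  cos th / s * (cos th / s) + sin th / s * (sin th / s) = 1 / (s * s).
Proof.
 intros Hs.
 replace (cos th / s * (cos th / s) + sin th / s * (sin th / s))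
   with ((Rsqr (sin th) + Rsqr (cos th)) / (s * s)) by (unfold Rsqr; field; lra).
 rewrite sin2_cos2; reflexivity.
Qed.

Lemma circ_outside s th : 0 < s < 1 -> outside_unit (circ s th).
Proof.
 intros Hs; unfold outside_unit, circ; simpl. rewrite circ_norm2 by lra.
 assert (0 < s * s < 1) by nra.
 replace 1 with ((s * s) / (s * s)) at 1 by (field; lra).
 unfold Rdiv; apply Rmult_lt_compat_r; [apply Rinv_0_lt_compat; lra | lra].
Qed.

(* 1 / circ s th = s e^(-i th) lies in the ball of radius d around 0 when s < d:
   this is how small circles around 0 correspond to large circles. *)
Lemma inv_circ_small s d th : 0 < s -> s < d ->
  ball (M := prod_UniformSpace R_UniformSpace R_UniformSpace) C0 d (Cinv (circ s th)).
Proof.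
 intros Hs Hsd.
 assert (Hinv : Cinv (circ s th) = (s * cos th, - (s * sin th))).
 { unfold Cinv, circ; simpl. rewrite circ_norm2 by lra. apply Cx_eq; simpl; field; lra. }
 rewrite Hinv. split; simpl; match goal with |- ball ?x _ ?y => change (Rabs (y - x) < d) end.
 - rewrite Rminus_0_r, Rabs_mult, Rabs_pos_eq by lra.
   pose proof (COS_bound th) as [? ?]. apply Rle_lt_trans with s; auto.
   rewrite <- (Rmult_1_r s) at 2. apply Rmult_le_compat_l. lra. apply Rabs_le; lra.
 - rewrite Rminus_0_r, Rabs_Ropp, Rabs_mult, Rabs_pos_eq by lra.
   pose proof (SIN_bound th) as [? ?]. apply Rle_lt_trans with s; auto.
   rewrite <- (Rmult_1_r s) at 2. apply Rmult_le_compat_l. lra. apply Rabs_le; lra.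
Qed.

Lemma ccont_circ2 (z : R * R) : fst z <> 0 -> ccont (fun p : R * R => circ (fst p) (snd p)) z.
Proof.
 intros Hz; split; unfold circ; simpl.
 - apply cont_div; auto. apply (cont_comp1 _ cos). apply cont_snd2. apply continuous_cos. apply cont_fst2.
 - apply cont_div; auto. apply (cont_comp1 _ sin). apply cont_snd2. apply continuous_sin. apply cont_fst2.
Qed.

Lemma ccont_circ_ds2 (z : R * R) : fst z <> 0 -> ccont (fun p : R * R => circ_ds (fst p) (snd p)) z.
Proof.
 intros Hz; split; unfold circ_ds; simpl.
 - apply (cont_div (fun p : R * R => - cos (snd p)) (fun p : R * R => fst p * fst p)).
   + apply cont_opp. apply (cont_comp1 _ cos). apply cont_snd2. apply continuous_cos.
   + apply cont_mul; apply cont_fst2.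
   + apply Rmult_integral_contrapositive; auto.
 - apply (cont_div (fun p : R * R => - sin (snd p)) (fun p : R * R => fst p * fst p)).
   + apply cont_opp. apply (cont_comp1 _ sin). apply cont_snd2. apply continuous_sin.
   + apply cont_mul; apply cont_fst2.
   + apply Rmult_integral_contrapositive; auto.
Qed.

Lemma ccont_circ s (th : R) : s <> 0 -> ccont (U:=R_UniformSpace) (fun t => circ s t) th.
Proof.
 intros Hz; split; unfold circ; simpl.
 - apply cont_div; auto. apply (cont_comp1 _ cos). apply cont_idR. apply continuous_cos. apply continuous_const.
 - apply cont_div; auto. apply (cont_comp1 _ sin). apply cont_idR. apply continuous_sin. apply continuous_const.
Qed.

Lemma circ_integrable h pr s : ccont_on h outside_unit -> is_component pr -> 0 < s < 1 ->
  ex_RInt (fun th => pr (h (circ s th))) 0 (2 * PI).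
Proof.
 intros Hc Hpr Hs. apply (ex_RInt_continuous (V:=R_CompleteNormedModule)). intros z _.
 apply (ccont_pr pr (fun t => h (circ s t))); auto.
 apply (ccont_comp (fun t => circ s t) h). apply ccont_circ; lra. apply Hc. apply circ_outside; auto.
Qed.

(* Independence of the radius: for h holomorphic on |u| > 1, the integral of
   h(circ s th) over th in [0, 2 pi] has zero derivative in s, because its
   s-derivative h'(circ s th) (d/ds circ) equals d/dth (i/s h(circ s th)). *)
Section RadiusIndependence.
Variables (h h' : Cx -> Cx).
Hypotheses (Hc : ccont_on h outside_unit) (Hc' : ccont_on h' outside_unit)
  (Hd : cderiv_on h h' outside_unit).
Variable pr : Cx -> R.
Hypothesis Hpr : is_component pr.

Let f := fun s th => pr (h (circ s th)).
Let df := fun s th => pr (Cmul (h' (circ s th)) (circ_ds s th)).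

Lemma circ_deriv_s s th : 0 < s < 1 -> is_derive (fun u => f u th) s (df s th).
Proof.
 intros Hs. unfold f, df.
 apply (has_deriv_pr pr (fun u => h (circ u th))); auto.
 apply (Hd (fun u => circ u th)). apply circ_outside; auto. apply has_deriv_circ_s; lra.
Qed.

Lemma circ_deriv_s_cont s0 th : 0 < s0 < 1 ->
  continuous (fun z : R * R => df (fst z) (snd z)) (s0, th).
Proof.
 intros Hs. unfold df.
 apply (ccont_pr pr (fun z : R * R => Cmul (h' (circ (fst z) (snd z))) (circ_ds (fst z) (snd z)))); auto.
 apply ccont_mul.
 - apply (ccont_comp (fun z : R * R => circ (fst z) (snd z)) h'). apply ccont_circ2; simpl; lra.
   apply Hc'. apply circ_outside; auto.
 - apply ccont_circ_ds2; simpl; lra.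
Qed.

Lemma circ_deriv_s_int s0 : 0 < s0 < 1 -> CRInt (df s0) 0 (2 * PI) = 0.
Proof.
 intros Hs.
 set (K := (0, 1 / s0) : Cx).
 set (prim := fun t => pr (Cmul K (h (circ s0 t)))).
 assert (Hprim : forall t, is_derive prim t (df s0 t)).
 { intro t. unfold prim, df. eapply isd_val.
   - apply (has_deriv_pr pr (fun t => Cmul K (h (circ s0 t)))); auto.
     apply has_deriv_mul. apply has_deriv_const. apply (Hd (fun t => circ s0 t)).
     apply circ_outside; auto. apply has_deriv_circ_th; lra.
   - f_equal. unfold K, circ_ds, circ_dth; apply Cx_eq; simpl; field; lra. }
 assert (Hdf : forall t, continuous (df s0) t).
 { intro t. apply (continuous_comp_2 (fun _ => s0) (fun x => x) df).
   apply continuous_const. apply continuous_id. apply circ_deriv_s_cont; auto. }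
 pose proof (is_RInt_derive prim (df s0) 0 (2 * PI) (fun x _ => Hprim x) (fun x _ => Hdf x)) as Hi.
 apply is_RInt_unique in Hi. rewrite Hi. unfold prim, circ.
 rewrite cos_2PI, sin_2PI, cos_0, sin_0.
 apply (minus_eq_zero (G:=R_AbelianGroup)).
Qed.

Lemma circ_int_deriv0 s0 : 0 < s0 < 1 ->
  is_derive (fun s => CRInt (fun th => f s th) 0 (2 * PI)) s0 0.
Proof.
 intros Hs. assert (HPI := PI_RGT_0).
 eapply isd_val. apply (is_derive_RInt_param f 0 (2 * PI) s0).
 - eapply filter_imp. 2: apply (locally_interval 0 1 s0 Hs).
   intros y Hy t _. exists (df y t). apply circ_deriv_s; auto.
 - intros t _. apply continuity_2d_pt_filterlim.
   change (continuous (fun z : R * R => Derive (fun u => f u (snd z)) (fst z)) (s0, t)).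
   apply (continuous_ext_loc _ (fun z : R * R => df (fst z) (snd z))).
   + eapply filter_imp. 2: apply (locally_fst s0 t _ (locally_interval 0 1 s0 Hs)).
     intros z Hz. symmetry. apply is_derive_unique. apply circ_deriv_s; auto.
   + apply circ_deriv_s_cont; auto.
 - eapply filter_imp. 2: apply (locally_interval 0 1 s0 Hs).
   intros y Hy. apply circ_integrable; auto.
 - rewrite (RInt_ext _ (df s0)).
   + apply circ_deriv_s_int; auto.
   + intros x _. apply is_derive_unique. apply circ_deriv_s; auto.
Qed.

End RadiusIndependence.

Lemma eq_by_eps (x y C : R) : 0 < C -> (forall e, 0 < e -> Rabs (x - y) <= C * e) -> x = y.
Proof.
 intros HC H. destruct (Req_dec x y) as [|Hn]; auto. exfalso.
 assert (Ha : 0 < Rabs (x - y)) by (apply Rabs_pos_lt; lra).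
 specialize (H (Rabs (x - y) / (2 * C))).
 assert (0 < Rabs (x - y) / (2 * C)) by (apply Rdiv_lt_0_compat; lra).
 specialize (H H0).
 replace (C * (Rabs (x - y) / (2 * C))) with (Rabs (x - y) / 2) in H by (field; lra).
 lra.
Qed.

(* The
   integral over |u| = 1/s of g du, i.e. of i h(circ s th) dth with
   h(u) = i u g(u), is independent of s, and h(circ s th) = i q(1/circ s th)
   tends to i q(0) uniformly as s -> 0. *)
Section ResidueAtInfinity.
Variables (g q : Cx -> Cx).
Hypothesis Hg : holo_on g outside_unit.
Hypothesis Hq : forall u, outside_unit u -> q (Cinv u) = Cmul u (g u).
Hypothesis Hqc : ccont (U := prod_UniformSpace R_UniformSpace R_UniformSpace) q C0.

Let h := fun u => Cmul Ci (Cmul u (g u)).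

Lemma h_holo : holo_on h outside_unit.
Proof. unfold h. apply holo_on_mul. apply holo_on_const. apply holo_on_mul. apply holo_on_id. exact Hg. Qed.

Lemma circ_int_radius pr s : is_component pr -> 0 < s <= 1/2 ->
  CRInt (fun th => pr (h (circ s th))) 0 (2 * PI)
  = CRInt (fun th => pr (h (circ (1/2) th))) 0 (2 * PI).
Proof.
 intros Hpr Hs. destruct h_holo as [Hc [h' [Hc' Hd]]].
 destruct (Req_dec s (1/2)) as [->|Hne]; auto.
 destruct (MVT_cor2 (fun s => CRInt (fun th => pr (h (circ s th))) 0 (2 * PI))
                    (fun _ => 0) s (1/2)) as [c [Hc1 Hc2]].
 - lra.
 - intros c Hc0. apply is_derive_Reals. apply (circ_int_deriv0 h h' Hc Hc' Hd pr Hpr). lra.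
 - lra.
Qed.

Lemma circ_int_half pr : is_component pr ->
  CRInt (fun th => pr (h (circ (1/2) th))) 0 (2 * PI) = 2 * PI * pr (Cmul Ci (q C0)).
Proof.
 intros Hpr. assert (HPI := PI_RGT_0). destruct h_holo as [Hc _].
 set (c0 := pr (Cmul Ci (q C0))).
 apply (eq_by_eps _ _ (2 * PI)); [lra | intros e He].
 assert (Hcont : continuous (fun z => pr (Cmul Ci (q z))) C0).
 { apply (ccont_pr pr (fun z => Cmul Ci (q z))); auto. apply ccont_mul; auto. apply ccont_const. }
 apply filterlim_locally with (eps := mkposreal e He) in Hcont.
 destruct Hcont as [d Hd0].
 set (s := Rmin (d / 2) (1/2)).
 assert (Hs : 0 < s <= 1/2).
 { unfold s; split. apply Rmin_glb_lt. destruct d; simpl; lra. lra. apply Rmin_r. }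
 assert (Hsd : s < d). { unfold s. eapply Rle_lt_trans. apply Rmin_l. destruct d; simpl; lra. }
 rewrite <- (circ_int_radius pr s Hpr Hs).
 assert (Hint : ex_RInt (fun th => pr (h (circ s th))) 0 (2 * PI))
   by (apply circ_integrable; auto; lra).
 replace (2 * PI * c0) with (CRInt (fun _ => c0) 0 (2 * PI)).
 2: { rewrite RInt_const. simpl. unfold scal; simpl; unfold mult; simpl; ring. }
 rewrite <- (RInt_minus (V:=R_CompleteNormedModule)); auto.
 2: apply ex_RInt_const.
 replace (2 * PI * e) with ((2 * PI - 0) * e) by ring.
 apply abs_RInt_le_const. lra.
 apply (ex_RInt_minus (V:=R_NormedModule)); auto. apply ex_RInt_const.
 intros t _.
 specialize (Hd0 _ (inv_circ_small s d t ltac:(lra) Hsd)).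
 change (Rabs (pr (Cmul Ci (q (Cinv (circ s t)))) - c0) < e) in Hd0.
 rewrite Hq in Hd0 by (apply circ_outside; lra).
 unfold h. simpl. unfold minus, plus, opp; simpl. unfold Rminus in Hd0. lra.
Qed.

Theorem residue_at_infinity : cauchy_int2 g = q C0.
Proof.
 assert (HPI := PI_RGT_0). destruct h_holo as [Hc _].
 assert (Hext : forall pr : Cx -> R, (fun th => pr (Cmul (g (gam th)) (dgam th)))
                         = (fun th => pr (h (circ (1/2) th)))).
 { intros pr. apply functional_extensionality; intro th.
   replace (circ (1/2) th) with (gam th) by (unfold circ, gam; apply Cx_eq; simpl; field).
   f_equal. unfold h, gam, dgam. apply Cx_eq; simpl; ring. }
 unfold cauchy_int2, circle2_integral.
 rewrite (Hext fst), (Hext snd).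
 rewrite !RInt_eq by (apply circ_integrable; [exact Hc | red; auto | lra]).
 rewrite (circ_int_half fst), (circ_int_half snd) by (red; auto).
 unfold Cdiv, Cinv; apply Cx_eq; simpl; field; lra.
Qed.
End ResidueAtInfinity.

Lemma gam_outside th : outside_unit (gam th).
Proof.
 unfold outside_unit, gam; simpl.
 replace (2 * cos th * (2 * cos th) + 2 * sin th * (2 * sin th))
   with (4 * (Rsqr (sin th) + Rsqr (cos th))) by (unfold Rsqr; ring).
 rewrite sin2_cos2; lra.
Qed.

Lemma ccont_gam (th : R) : ccont (U:=R_UniformSpace) gam th.
Proof.
 split; unfold gam; simpl; apply cont_mul; try apply continuous_const.
 - apply (cont_comp1 _ cos). apply cont_idR. apply continuous_cos.
 - apply (cont_comp1 _ sin). apply cont_idR. apply continuous_sin.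
Qed.

Lemma ccont_dgam (th : R) : ccont (U:=R_UniformSpace) dgam th.
Proof.
 split; unfold dgam; simpl; apply cont_mul; try apply continuous_const.
 - apply (cont_comp1 _ sin). apply cont_idR. apply continuous_sin.
 - apply (cont_comp1 _ cos). apply cont_idR. apply continuous_cos.
Qed.

Lemma gam_integrable pr F : is_component pr -> ccont_on F outside_unit ->
  ex_RInt (fun th => pr (Cmul (F (gam th)) (dgam th))) 0 (2 * PI).
Proof.
 intros Hpr HF. apply (ex_RInt_continuous (V:=R_CompleteNormedModule)). intros z _.
 apply (ccont_pr pr (fun th => Cmul (F (gam th)) (dgam th))); auto.
 apply ccont_mul. apply (ccont_comp gam F). apply ccont_gam. apply HF, gam_outside. apply ccont_dgam.
Qed.

Lemma cauchy_int2_ext F G : (forall u, outside_unit u -> F u = G u) -> cauchy_int2 F = cauchy_int2 G.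
Proof.
 intros H. unfold cauchy_int2, circle2_integral.
 assert (E : forall th, F (gam th) = G (gam th)) by (intro; apply H, gam_outside).
 replace (fun th => fst (Cmul (F (gam th)) (dgam th))) with (fun th => fst (Cmul (G (gam th)) (dgam th)))
   by (apply functional_extensionality; intro th; rewrite E; auto).
 replace (fun th => snd (Cmul (F (gam th)) (dgam th))) with (fun th => snd (Cmul (G (gam th)) (dgam th)))
   by (apply functional_extensionality; intro th; rewrite E; auto).
 reflexivity.
Qed.

Lemma cauchy_int2_linear a F G : ccont_on F outside_unit -> ccont_on G outside_unit ->
  cauchy_int2 (fun u => Cadd (Cmul a (F u)) (G u)) = Cadd (Cmul a (cauchy_int2 F)) (cauchy_int2 G).
Proof.
 intros HF HG. unfold cauchy_int2, circle2_integral. cbv zeta.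
 set (f1 := fun th => fst (Cmul (F (gam th)) (dgam th))).
 set (f2 := fun th => snd (Cmul (F (gam th)) (dgam th))).
 set (g1 := fun th => fst (Cmul (G (gam th)) (dgam th))).
 set (g2 := fun th => snd (Cmul (G (gam th)) (dgam th))).
 assert (E1 : (fun th => fst (Cmul (Cadd (Cmul a (F (gam th))) (G (gam th))) (dgam th))) =
   (fun th => plus (minus (scal (fst a) (f1 th)) (scal (snd a) (f2 th))) (g1 th))).
 { apply functional_extensionality; intro th.
   unfold f1, f2, g1, scal, minus, plus, opp; simpl. unfold mult; simpl. ring. }
 assert (E2 : (fun th => snd (Cmul (Cadd (Cmul a (F (gam th))) (G (gam th))) (dgam th))) =
   (fun th => plus (plus (scal (fst a) (f2 th)) (scal (snd a) (f1 th))) (g2 th))).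
 { apply functional_extensionality; intro th.
   unfold f2, f1, g2, scal, minus, plus, opp; simpl. unfold mult; simpl. ring. }
 assert (I1 : ex_RInt f1 0 (2 * PI)) by (apply (gam_integrable fst); auto; red; auto).
 assert (I2 : ex_RInt f2 0 (2 * PI)) by (apply (gam_integrable snd); auto; red; auto).
 assert (J1 : ex_RInt g1 0 (2 * PI)) by (apply (gam_integrable fst); auto; red; auto).
 assert (J2 : ex_RInt g2 0 (2 * PI)) by (apply (gam_integrable snd); auto; red; auto).
 assert (Hscal : forall c f, ex_RInt f 0 (2 * PI) -> ex_RInt (fun th => scal c (f th)) 0 (2 * PI))
   by (intros; apply (ex_RInt_scal (V:=R_NormedModule)); auto).
 assert (Hplus : forall f f', ex_RInt f 0 (2 * PI) -> ex_RInt f' 0 (2 * PI) ->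
                 ex_RInt (fun th => plus (f th) (f' th)) 0 (2 * PI))
   by (intros; apply (ex_RInt_plus (V:=R_NormedModule)); auto).
 assert (Hminus : forall f f', ex_RInt f 0 (2 * PI) -> ex_RInt f' 0 (2 * PI) ->
                  ex_RInt (fun th => minus (f th) (f' th)) 0 (2 * PI))
   by (intros; apply (ex_RInt_minus (V:=R_NormedModule)); auto).
 rewrite E1, E2, !RInt_eq by auto.
 rewrite !(RInt_plus (V:=R_CompleteNormedModule)) by auto.
 rewrite !(RInt_minus (V:=R_CompleteNormedModule)) by auto.
 rewrite !(RInt_scal (V:=R_CompleteNormedModule)) by auto.
 assert (HPI := PI_RGT_0).
 unfold Cdiv, Cinv, scal, minus, plus, opp; simpl. unfold mult; simpl.
 apply Cx_eq; simpl; field; lra.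
Qed.

Lemma cauchy_int2_zero : cauchy_int2 (fun _ => C0) = C0.
Proof.
 assert (HPI := PI_RGT_0).
 unfold cauchy_int2, circle2_integral, Cdiv, Cinv; simpl.
 replace (fun th : R => 0 * (- 2 * sin th) - 0 * (2 * cos th)) with (fun _ : R => 0)
   by (apply functional_extensionality; intro; ring).
 replace (fun th : R => 0 * (2 * cos th) + 0 * (- 2 * sin th)) with (fun _ : R => 0)
   by (apply functional_extensionality; intro; ring).
 rewrite RInt_eq by apply ex_RInt_const. rewrite RInt_const.
 apply Cx_eq; simpl; unfold scal; simpl; unfold mult; simpl; field; lra.
Qed.

Lemma cauchy_int2_sum n (c : nat -> Cx) (F : nat -> Cx -> Cx) :
  (forall k, ccont_on (F k) outside_unit) ->
  cauchy_int2 (fun u => Csum n (fun k => Cmul (c k) (F k u)))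
  = Csum n (fun k => Cmul (c k) (cauchy_int2 (F k))).
Proof.
 intros HF. unfold Csum. induction (seq 0 n) as [|k l IH]; simpl.
 - apply cauchy_int2_zero.
 - rewrite <- IH. apply cauchy_int2_linear; [apply HF |].
   clear IH. intros u Hu. induction l as [|k' l IHl]; simpl.
   + apply ccont_const.
   + apply ccont_add; [apply ccont_mul; [apply ccont_const | apply HF; auto] | exact IHl].
Qed.

Lemma gterm_holo K t1 t2 m j : holo_on (gterm K t1 t2 m j) outside_unit.
Proof.
 unfold gterm, weight. apply holo_on_div.
 - apply holo_on_mul; [apply holo_on_mul |].
   + apply holo_on_pow, holo_on_sub; [apply holo_on_id | apply holo_on_const].
   + apply holo_on_pow, holo_on_id.
   + apply holo_on_exp, holo_on_add.
     * apply holo_on_div; [apply holo_on_const | | apply Cnonzero_sub1].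
       apply holo_on_sub; [apply holo_on_id | apply holo_on_const].
     * apply holo_on_div; [apply holo_on_const | | apply Cnonzero_add1].
       apply holo_on_add; [apply holo_on_id | apply holo_on_const].
 - apply holo_on_mul; apply holo_on_pow.
   + apply holo_on_sub; [apply holo_on_id | apply holo_on_const].
   + apply holo_on_add; [apply holo_on_id | apply holo_on_const].
 - apply Cnonzero_gterm_den.
Qed.

Lemma qterm_cont0 K t1 t2 m d :
  ccont (U := prod_UniformSpace R_UniformSpace R_UniformSpace) (qterm K t1 t2 m d) C0.
Proof.
 unfold qterm, inv_exponent. apply ccont_div.
 - apply ccont_mul; [apply ccont_mul |].
   + apply ccont_pow, ccont_sub; [apply ccont_const | apply ccont_id].
   + apply ccont_pow, ccont_id.
   + apply ccont_exp, ccont_add.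
     * apply ccont_div; [apply ccont_mul; [apply ccont_const | apply ccont_id] | | apply Cnonzero_1sub0].
       apply ccont_sub; [apply ccont_const | apply ccont_id].
     * apply ccont_div; [apply ccont_mul; [apply ccont_const | apply ccont_id] | | apply Cnonzero_1add0].
       apply ccont_add; [apply ccont_const | apply ccont_id].
 - apply ccont_mul; apply ccont_pow.
   + apply ccont_sub; [apply ccont_const | apply ccont_id].
   + apply ccont_add; [apply ccont_const | apply ccont_id].
 - apply Cnonzero_qterm_den.
Qed.

Lemma cauchy_int2_gterm K t1 t2 m j d : (m + j + 1 + d = K + K)%nat ->
  cauchy_int2 (gterm K t1 t2 m j) = qterm K t1 t2 m d C0.
Proof.
 intros Hd. apply residue_at_infinity.
 - apply gterm_holo.
 - intros u Hu. apply qterm_inv; auto.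
 - apply qterm_cont0.
Qed.

End Analysis.

Import Algebra Analysis.

Theorem lemma1 (K : nat) (hK : (1 <= K)%nat) (t1 t2 : Cx) :
  det (2 * K) (Amat K t1 t2) = Cpow (RtoC (-2)) (K * K).
Proof.
 replace (2 * K)%nat with (K + K)%nat by lia.
 apply (@det_Amat_factor K t1 t2 (fun m j => cauchy_int2 (gterm K t1 t2 m j))).
 - intros i j Hi _. rewrite Amat_Aint.
   rewrite (cauchy_int2_ext _ _ (fun u => @Aint_expand K t1 t2 i j u Hi)).
   apply cauchy_int2_sum. intros m. apply (proj1 (gterm_holo K t1 t2 m j)).
 (* Below the antidiagonal, q_{m,d}(0) = 0 since d > 0 ... *)
 - intros m j Hmj.
   rewrite (cauchy_int2_gterm K t1 t2 m j (Nat.pred (K + K) - (m + j))) by lia.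
   rewrite qterm_at0. destruct (Nat.pred (K + K) - (m + j))%nat eqn:E; [lia | reflexivity].
 (* ... and on it q_{m,0}(0) = 1. *)
 - intros m j Hmj. rewrite (cauchy_int2_gterm K t1 t2 m j 0) by lia. apply qterm_at0.
Qed.
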